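(* Let $C$ be a nonempty proper subset of $V$ and $\lambda=d(\chi_C)$. Then $V^c_O\cap V^c_\lambda$ is contained in an affine subspace of $K$ of codimension $\kappa(C,V\setminus C)$. In particular, if $V^c_O\cap V^c_\lambda$ is a face of codimension one, then $\kappa(C,V\setminus C)=1$, i.e. the cut defined by $C$ is a bond.
   Context: $G=(V,E)$ is a finite connected graph; each edge gives oriented edges $e,\bar e$. Real $1$-cochains are $x$ on oriented edges with $x_{\bar e}=-x_e$, $\langle x,y\rangle=\sum_{e\in E}x_ey_e$, $q(x)=\langle x,x\rangle$. For $f:V\to\mathbb R$, $d(f)(e)=f(\text{head}(e))-f(\text{tail}(e))$; $K=d(\mathbb R^V)$ and $L=d(\mathbb Z^V)$. $V^c_\lambda=\{x\in K: q(x-\lambda)\le q(x-\mu)\ \forall\mu\in L\}$. $\chi_C$ is the characteristic function of $C$. If $G[C]$ has $k$ connected components and $G[V\setminus C]$ has $r$ connected components, the rank of the cut is $\kappa(C,V\setminus C)=k+r-1$; the cut is a bond when this rank is $1$. *)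

From HB Require Import structures.
From mathcomp Require Import all_boot all_order all_algebra.
Set Implicit Arguments. Unset Strict Implicit. Unset Printing Implicit Defensive.
Import Order.TTheory GRing.Theory Num.Theory.
Local Open Scope ring_scope.

(* A finite (multi)graph: vertex set 'I_n, edge set 'I_m; each edge e comes
   with a chosen orientation tl e -> hd e.  A real 1-cochain is identified with
   its values on the chosen orientations, i.e. with a row vector x : 'rV[R]_m
   (the value on the reversed edge is -x_e, implicitly). *)

Definition adj (n m : nat) (hd tl : 'I_m -> 'I_n) : rel 'I_n :=
  fun u v => [exists e : 'I_m, ((tl e == u) && (hd e == v)) || ((tl e == v) && (hd e == u))].

Definition connectedG (n m : nat) (hd tl : 'I_m -> 'I_n) : Prop :=
  forall u v : 'I_n, connect (adj hd tl) u v.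

Definition adj_in (n m : nat) (hd tl : 'I_m -> 'I_n) (C : {set 'I_n}) : rel 'I_n :=
  fun u v => [&& u \in C, v \in C & adj hd tl u v].

Definition ncomp_ind (n m : nat) (hd tl : 'I_m -> 'I_n) (C : {set 'I_n}) : nat :=
  n_comp (adj_in hd tl C) (mem C).

Definition cut_rank (n m : nat) (hd tl : 'I_m -> 'I_n) (C : {set 'I_n}) : nat :=
  (ncomp_ind hd tl C + ncomp_ind hd tl (~: C) - 1)%N.

Definition dmx (R : numDomainType) (n m : nat) (hd tl : 'I_m -> 'I_n) : 'M[R]_(n, m) :=
  \matrix_(i, e) ((hd e == i)%:R - (tl e == i)%:R).

Definition dcob (R : numDomainType) (n m : nat) (hd tl : 'I_m -> 'I_n) (f : 'I_n -> R) : 'rV[R]_m :=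
  \row_i f i *m dmx R hd tl.

Definition ip (R : numDomainType) (m : nat) (x y : 'rV[R]_m) : R := \sum_(e < m) x 0 e * y 0 e.
Definition qf (R : numDomainType) (m : nat) (x : 'rV[R]_m) : R := ip x x.

(* K = d(R^V) is the row space of dmx (x \in K iff (x <= dmx)%MS); L = d(Z^V). *)

Definition voronoi (R : realFieldType) (n m : nat) (hd tl : 'I_m -> 'I_n)
    (lam x : 'rV[R]_m) : Prop :=
  (x <= dmx R hd tl)%MS /\
  forall f : 'I_n -> int,
    qf (x - lam) <= qf (x - dcob hd tl (fun i => (f i)%:~R)).

Definition chi (R : numDomainType) (n : nat) (C : {set 'I_n}) : 'I_n -> R :=
  fun i => (i \in C)%:R.

Definition is_face (R : realFieldType) (m : nat) (P F : 'rV[R]_m -> Prop) : Prop :=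
  exists (a : 'rV[R]_m) (b : R),
    (forall x, P x -> ip a x <= b) /\ (forall x, F x <-> (P x /\ ip a x = b)).

Definition aff_indep_in (R : fieldType) (m r : nat) (F : 'rV[R]_m -> Prop) : Prop :=
  exists p0 : 'rV[R]_m, F p0 /\
    exists P : 'M[R]_(r, m), (forall i, F (p0 + row i P)) /\ \rank P = r.

Definition aff_dim (R : fieldType) (m r : nat) (F : 'rV[R]_m -> Prop) : Prop :=
  aff_indep_in r F /\ ~ aff_indep_in r.+1 F.

From HB Require Import structures.
From mathcomp Require Import all_boot all_order all_algebra zify.
From Stdlib Require Import Classical.
Import Order.TTheory GRing.Theory Num.Theory.
Set Implicit Arguments. Unset Strict Implicit. Unset Printing Implicit Defensive.

(* Let Q be a connected component of G[C] or of G[V \ C], and s = 1 or -1 according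
   to the side of Q.  Every edge leaving Q is a cut edge, so <lam, d chi_Q> = s q(d chi_Q),
   and both s d chi_Q and lam - s d chi_Q lie in L.  A point x of both Voronoi cells is
   nearer to 0 than to s d chi_Q and nearer to lam than to lam - s d chi_Q; together these
   force 2 <x, d chi_Q> = s q(d chi_Q).  Hence the intersection lies in a translate of the
   orthogonal complement, inside K, of the span of the d chi_Q.  The chi_Q are independent
   and, G being connected, ker d consists of the constants, so this span has dimension
   #components - 1 = kappa(C, V \ C). *)

Section Components.
Variables (n m : nat) (hd tl : 'I_m -> 'I_n).
Implicit Types (C : {set 'I_n}) (v w : 'I_n).

Lemma adj_sym : symmetric (adj hd tl).
Proof. by move=> u v; apply/existsP/existsP => -[e He]; exists e; rewrite orbC. Qed.

Lemma adj_in_sym C : symmetric (adj_in hd tl C).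
Proof. by move=> u v; rewrite /adj_in adj_sym andbCA. Qed.

Lemma adj_in_connect_sym C : connect_sym (adj_in hd tl C).
Proof. exact/sym_connect_sym/adj_in_sym. Qed.

Lemma connect_adj_in_mem C v w : connect (adj_in hd tl C) v w -> v \in C -> w \in C.
Proof.
case/connectP=> p; elim: p v => [|y p IHp] v /=; first by move=> _ ->.
by case/andP=> /and3P[_ yC _] py wE _; apply: IHp py wE yC.
Qed.

Lemma adj_edge e : adj hd tl (hd e) (tl e).
Proof. by apply/existsP; exists e; rewrite !eqxx orbT. Qed.

Definition comp_root (C : {set 'I_n}) v :=
  if v \in C then fingraph.root (adj_in hd tl C) v
  else fingraph.root (adj_in hd tl (~: C)) v.

Lemma comp_root_mem C v : (comp_root C v \in C) = (v \in C).
Proof.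
rewrite /comp_root; case: ifP => vC; first exact: connect_adj_in_mem (connect_root _ v) vC.
apply/negbTE; rewrite -in_setC; apply: connect_adj_in_mem (connect_root _ v) _.
by rewrite in_setC vC.
Qed.

Lemma comp_root_edge C e :
  (hd e \in C) = (tl e \in C) -> comp_root C (hd e) = comp_root C (tl e).
Proof.
move=> sameC; rewrite /comp_root -sameC; case: ifP => hC.
  apply/(fingraph.rootP (adj_in_connect_sym C)); apply: connect1.
  by rewrite /adj_in hC -sameC hC adj_edge.
apply/(fingraph.rootP (adj_in_connect_sym (~: C))); apply: connect1.
by rewrite /adj_in !in_setC -sameC hC adj_edge.
Qed.

Lemma card_comp_roots C :
  #|[set v | comp_root C v == v]| = (ncomp_ind hd tl C + ncomp_ind hd tl (~: C))%N.
Proof.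
rewrite -(cardsID C) /ncomp_ind; congr (_ + _)%N; apply: eq_card => v;
  by rewrite !inE /comp_root /roots; case: (v \in C); rewrite /= ?andbT ?andbF.
Qed.

Lemma ncomp_ind_gt0 C : C != set0 -> (0 < ncomp_ind hd tl C)%N.
Proof.
case/set0Pn=> v vC; apply/card_gt0P; exists (fingraph.root (adj_in hd tl C) v).
rewrite !inE /= roots_root; last exact: adj_in_connect_sym.
exact: connect_adj_in_mem (connect_root _ v) vC.
Qed.

Lemma cut_rank_gt0 C : C != set0 -> C != setT -> (0 < cut_rank hd tl C)%N.
Proof.
move=> C0 CT; rewrite subn_gt0 -addn1 leq_add ?ncomp_ind_gt0 //.
by apply: contraNneq CT => CC0; rewrite -(setCK C) CC0 setC0.
Qed.

End Components.

Local Open Scope ring_scope.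

Lemma sum_mul_eq_nat (R : pzSemiRingType) n (F : 'I_n -> R) a :
  \sum_i F i * (a == i)%:R = F a.
Proof.
rewrite (bigD1 a) //= eqxx mulr1 big1 ?addr0 // => i.
by rewrite eq_sym => /negPf ->; rewrite mulr0.
Qed.

Section InnerProduct.
Variables (R : numDomainType) (m : nat).
Implicit Types (x y z lam mu : 'rV[R]_m).

Lemma ipBl x y z : ip (x - y) z = ip x z - ip y z.
Proof. by rewrite /ip -sumrB; apply: eq_bigr => e _; rewrite !mxE mulrBl. Qed.

Lemma ipZr x y c : ip x (c *: y) = c * ip x y.
Proof. by rewrite /ip mulr_sumr; apply: eq_bigr => e _; rewrite !mxE mulrCA. Qed.

Lemma qfZ x c : qf (c *: x) = c * c * qf x.
Proof. by rewrite /qf /ip mulr_sumr; apply: eq_bigr => e _; rewrite !mxE mulrACA. Qed.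

Lemma qfB x y : qf (x - y) - qf x = qf y - ip x y *+ 2.
Proof.
rewrite /qf /ip -sumrMnl -!sumrB; apply: eq_bigr => e _; rewrite !mxE.
by rewrite -!expr2 sqrrB addrAC (addrAC (x 0 e ^+ 2)) subrr add0r addrC.
Qed.

(* Since <lam, mu> = s q(mu), the last two hypotheses are opposite half-spaces
   bounded by the same hyperplane. *)
Lemma ip_eq_of_nearer x lam mu (s : R) :
  s * s = 1 -> ip lam mu = s * qf mu ->
  qf (x - 0) <= qf (x - s *: mu) -> qf (x - lam) <= qf (x - (lam - s *: mu)) ->
  ip x mu *+ 2 = s * qf mu.
Proof.
move=> ss lam_mu near0 near_lam.
rewrite subr0 -subr_ge0 qfB qfZ ss mul1r ipZr subr_ge0 in near0.
have shift : x - (lam - s *: mu) = (x - lam) - (- s) *: mu.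
  by rewrite scaleNr opprK opprB addrA addrAC.
rewrite shift -subr_ge0 qfB qfZ mulrNN ss mul1r ipZr ipBl lam_mu in near_lam.
rewrite mulNr mulrBr mulrA ss mul1r opprB opprK addrA [qf mu + _]addrC subrK
  addrA subr_ge0 -mulr2n in near_lam.
have <- : (s * ip x mu) *+ 2 = qf mu by apply/le_anti; rewrite near0 near_lam.
by rewrite -mulrnAr mulrA ss mul1r.
Qed.

End InnerProduct.

Section Coboundary.
Variables (R : numDomainType) (n m : nat) (hd tl : 'I_m -> 'I_n).
Implicit Types (f g : 'I_n -> R) (u : 'rV[R]_n).

Lemma mul_dmx_entry u e : (u *m dmx R hd tl) 0 e = u 0 (hd e) - u 0 (tl e).
Proof.
rewrite mxE; under eq_bigr do rewrite mxE mulrBr.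
by rewrite sumrB !sum_mul_eq_nat.
Qed.

Lemma dcob_entry f e : dcob hd tl f 0 e = f (hd e) - f (tl e).
Proof. by rewrite /dcob mul_dmx_entry !mxE. Qed.

Lemma eq_dcob f g : f =1 g -> dcob hd tl f = dcob hd tl g.
Proof. by move=> fg; apply/rowP => e; rewrite !dcob_entry !fg. Qed.

Lemma dcobB f g : dcob hd tl (fun i => f i - g i) = dcob hd tl f - dcob hd tl g.
Proof.
by rewrite /dcob -mulmxBl; congr (_ *m _); apply/rowP => i; rewrite !mxE.
Qed.

Lemma dcobZ c f : dcob hd tl (fun i => c * f i) = c *: dcob hd tl f.
Proof.
by rewrite /dcob scalemxAl; congr (_ *m _); apply/rowP => i; rewrite !mxE.
Qed.

Lemma dcob_const_eq u :
  u *m dmx R hd tl = 0 -> forall v w, connect (adj hd tl) v w -> u 0 v = u 0 w.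
Proof.
move=> du0 v w /connectP[p]; elim: p v => [|y p IHp] v /=; first by move=> _ ->.
case/andP=> /existsP[e vy] py wE; rewrite -(IHp y py wE).
have /eqP := congr1 (fun x : 'rV[R]_m => x 0 e) du0.
rewrite mul_dmx_entry mxE subr_eq0 => /eqP.
by case/orP: vy => /andP[/eqP <- /eqP <-].
Qed.

End Coboundary.

Lemma mxrank_ker_dmx_le1 (R : numFieldType) n m (hd tl : 'I_m -> 'I_n) :
  connectedG hd tl -> (\rank (kermx (dmx R hd tl)) <= 1)%N.
Proof.
move=> conn; apply: leq_trans (rank_leq_row (const_mx 1 : 'rV[R]_n)).
apply/mxrankS/row_subP => i; apply/sub_rVP; exists (row i (kermx (dmx R hd tl)) 0 i).
apply/rowP => v; rewrite [RHS]mxE [const_mx 1 0 v]mxE mulr1.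
by apply: dcob_const_eq (conn v i); rewrite -row_mul mulmx_ker row0.
Qed.

Section CutComponents.
Variables (R : numDomainType) (n m : nat) (hd tl : 'I_m -> 'I_n) (C : {set 'I_n}).
Implicit Types (r : 'I_n).

Local Notation lam := (dcob hd tl (chi R C)).

Definition comp_chi r : 'I_n -> R := fun v => (comp_root hd tl C v == r)%:R.

Definition side_sign r : int := if r \in C then 1 else -1.

Lemma side_signE r : (side_sign r)%:~R = (if r \in C then 1 else -1) :> R.
Proof. by rewrite /side_sign; case: (r \in C); rewrite ?mulrNz. Qed.

Lemma side_sign_sqr r : (side_sign r)%:~R * (side_sign r)%:~R = 1 :> R.
Proof. by rewrite -intrM /side_sign; case: (r \in C). Qed.

Lemma ip_cut_comp r :
  ip lam (dcob hd tl (comp_chi r)) = (side_sign r)%:~R * qf (dcob hd tl (comp_chi r)).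
Proof.
rewrite /qf /ip mulr_sumr; apply: eq_bigr => e _; rewrite !dcob_entry /chi /comp_chi.
set rh := comp_root hd tl C (hd e); set rt := comp_root hd tl C (tl e).
(* An edge inside one side of the cut leaves no component, and each component lies
   on the side of its root; the identity is then checked edge by edge. *)
have : [&& ((hd e \in C) == (tl e \in C)) ==> ((rh == r) == (rt == r)),
           (rh == r) ==> ((r \in C) == (hd e \in C)) &
           (rt == r) ==> ((r \in C) == (tl e \in C))].
  apply/and3P; split; apply/implyP.
  - by move=> /eqP/comp_root_edge; rewrite -/rh -/rt => ->.
  - by move=> /eqP <-; rewrite comp_root_mem.
  - by move=> /eqP <-; rewrite comp_root_mem.
rewrite side_signE; case: (hd e \in C); case: (tl e \in C); case: (r \in C);
  case: (rh == r); case: (rt == r) => //= _;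
  by rewrite ?subrr ?subr0 ?sub0r ?mulr0 ?mul0r ?mulr1 ?mul1r ?mulrNN ?mulN1r ?opprK /= ?mulr1.
Qed.

Definition comp_int r : 'I_n -> int := fun v => side_sign r * (comp_root hd tl C v == r).

Lemma dcob_comp_int r :
  dcob hd tl (fun v => (comp_int r v)%:~R) = (side_sign r)%:~R *: dcob hd tl (comp_chi r).
Proof. by rewrite -dcobZ; apply: eq_dcob => v; rewrite intrM. Qed.

Lemma dcob_cut_sub_comp_int r :
  dcob hd tl (fun v => ((v \in C)%:Z - comp_int r v)%:~R) =
  lam - (side_sign r)%:~R *: dcob hd tl (comp_chi r).
Proof.
by rewrite -dcobZ -dcobB; apply: eq_dcob => v; rewrite intrB intrM.
Qed.

End CutComponents.

Lemma trmx_mul_self_eq0 (R : realFieldType) p m (A : 'M[R]_(p, m)) :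
  A *m A^T = 0 -> A = 0.
Proof.
move=> AAT0; apply/matrixP => i e; rewrite mxE.
have /eqP : \sum_k A i k * A i k = 0.
  transitivity ((A *m A^T) i i); last by rewrite AAT0 mxE.
  by rewrite mxE; apply: eq_bigr => k _; rewrite mxE.
rewrite psumr_eq0 => [/allP/(_ e (mem_index_enum e))/implyP/(_ isT)|k _].
  by rewrite mulf_eq0 orbb => /eqP.
by rewrite -expr2 sqr_ge0.
Qed.

Lemma mxrank_mul_trmx (R : realFieldType) p m (A : 'M[R]_(p, m)) :
  \rank (A *m A^T) = \rank A.
Proof.
apply/eqP; rewrite eqn_leq mxrankM_maxl /=.
have kerS : (kermx (A *m A^T) <= kermx A)%MS.
  apply/sub_kermxP/trmx_mul_self_eq0.
  by rewrite trmx_mul !mulmxA -(mulmxA _ A) mulmx_ker mul0mx.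
by have := mxrankS kerS; rewrite !mxrank_ker leq_sub2lE ?rank_leq_row.
Qed.

Lemma submx_rank_between (R : fieldType) p m (U : 'M[R]_m) (V : 'M[R]_(p, m)) t :
  (U <= V)%MS -> (\rank U <= t <= \rank V)%N ->
  exists W : 'M[R]_m, [/\ (U <= W)%MS, (W <= V)%MS & \rank W = t].
Proof.
move=> sUV /andP[].
have [k] := ubnP (t - \rank U); elim: k U sUV => // k IHk U sUV.
rewrite ltnS => tU Ut tV; have [eqUt|neUt] := eqVneq (\rank U) t.
  by exists U; split.
have {Ut neUt} ltUt : (\rank U < t)%N by rewrite ltn_neqAle neUt.
have /row_subPn[i VnU] : ~~ (V <= U)%MS.
  by apply: contraTN ltUt => /mxrankS VU; rewrite -leqNgt (leq_trans tV).
have sUU' : (U <= U + row i V)%MS by exact: addsmxSl.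
have rU' : \rank (U + row i V)%MS = (\rank U).+1.
  apply/eqP; rewrite eqn_leq; apply/andP; split.
    rewrite -[(\rank U).+1]addn1.
    exact: leq_trans (mxrank_adds_leqif U (row i V)) (leq_add _ (rank_leq_row _)).
  have : (U < U + row i V)%MS.
    by rewrite ltmxE sUU' /=; apply: contra VnU; apply: submx_trans (addsmxSr _ _).
  by rewrite ltmxErank => /andP[].
have sU'V : (U + row i V <= V)%MS by rewrite addsmx_sub sUV row_sub.
have [||W [sU'W sWV rW]] := IHk _ sU'V _ _ tV.
- by rewrite rU' subnS (leq_trans _ tU) // prednK // subn_gt0.
- by rewrite rU'.
- by exists W; split => //; apply: submx_trans sUU' sU'W.
Qed.

Lemma exists_affine_base (R : fieldType) p m (V : 'M[R]_(p, m)) (U : 'M[R]_m)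
    (F : 'rV[R]_m -> Prop) :
  (forall x, F x -> (x <= V)%MS) -> (forall x y, F x -> F y -> (x - y <= U)%MS) ->
  exists2 a : 'rV[R]_m, (a <= V)%MS & forall x, F x -> (x - a <= U)%MS.
Proof.
move=> FV FU; have [[a Fa]|noF] := classic (exists a, F a).
  by exists a; [apply: FV | move=> x Fx; apply: FU].
by exists 0; [apply: sub0mx | move=> x Fx; case: noF; exists x].
Qed.

Lemma aff_indep_in_rank (R : fieldType) m r (F : 'rV[R]_m -> Prop) a (W : 'M[R]_m) :
  aff_indep_in r F -> (forall x, F x -> (x - a <= W)%MS) -> (r <= \rank W)%N.
Proof.
move=> [p0 [Fp0 [P [FP <-]]]] FW; apply/mxrankS/row_subP => i.
have -> : row i P = (p0 + row i P - a) - (p0 - a).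
  by rewrite opprB addrA subrK addrAC subrr add0r.
by rewrite addmx_sub ?eqmx_opp ?FW.
Qed.

Section CutMatrix.
Variables (R : numFieldType) (n m : nat) (hd tl : 'I_m -> 'I_n) (C : {set 'I_n}).

Local Notation D := (dmx R hd tl).

Definition comp_mx : 'M[R]_n := \matrix_(r, v) comp_chi R hd tl C r v.

Definition comp_cochain_mx : 'M[R]_(n, m) := comp_mx *m D.

Lemma row_comp_cochain_mx r : row r comp_cochain_mx = dcob hd tl (comp_chi R hd tl C r).
Proof. by rewrite row_mul /dcob; congr (_ *m _); apply/rowP => v; rewrite !mxE. Qed.

Lemma mul_tr_comp_cochain_mx (x : 'rV[R]_m) r :
  (x *m comp_cochain_mx^T) 0 r = ip x (dcob hd tl (comp_chi R hd tl C r)).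
Proof. by rewrite mxE -row_comp_cochain_mx; apply: eq_bigr => e _; rewrite !mxE. Qed.

(* The rows of comp_mx indexed by component roots form an identity submatrix. *)
Lemma card_comp_roots_le_rank : (#|[set v | comp_root hd tl C v == v]| <= \rank comp_mx)%N.
Proof.
set S := [set v | comp_root hd tl C v == v].
pose Z : 'M[R]_(#|S|, n) := \matrix_(i, r) (enum_val i == r)%:R.
pose Y : 'M[R]_(n, #|S|) := \matrix_(v, j) (enum_val j == v)%:R.
have XY r j : (comp_mx *m Y) r j = (enum_val j == r)%:R.
  rewrite mxE; under eq_bigr do rewrite !mxE.
  rewrite (sum_mul_eq_nat (comp_chi R hd tl C r)) /comp_chi.
  by have := enum_valP j; rewrite inE => /eqP ->.
have ZXY1 : Z *m (comp_mx *m Y) = 1%:M.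
  apply/matrixP => i j; rewrite !mxE; under eq_bigr do rewrite XY mxE mulrC.
  by rewrite sum_mul_eq_nat (inj_eq enum_val_inj) eq_sym.
have := mxrankM_maxr Z (comp_mx *m Y); rewrite ZXY1 mxrank1 => /leq_trans; apply.
exact: mxrankM_maxl.
Qed.

Lemma mxrank_comp_cochain_mx :
  connectedG hd tl -> (cut_rank hd tl C <= \rank comp_cochain_mx)%N.
Proof.
move=> conn; rewrite /cut_rank -card_comp_roots leq_subLR addnC.
apply: leq_trans card_comp_roots_le_rank _.
rewrite -(mxrank_mul_ker comp_mx D) leq_add2l.
exact: leq_trans (mxrankS (capmxSr _ _)) (mxrank_ker_dmx_le1 R conn).
Qed.

End CutMatrix.

Section VoronoiCut.
Variables (R : realFieldType) (n m : nat) (hd tl : 'I_m -> 'I_n) (C : {set 'I_n}).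

Local Notation D := (dmx R hd tl).
Local Notation lam := (dcob hd tl (chi R C)).
Local Notation M := (comp_cochain_mx R hd tl C).

Lemma voronoi_cut_comp x r :
  voronoi hd tl 0 x -> voronoi hd tl lam x ->
  ip x (dcob hd tl (comp_chi R hd tl C r)) *+ 2 =
  (side_sign C r)%:~R * qf (dcob hd tl (comp_chi R hd tl C r)).
Proof.
move=> [_ near0] [_ near_lam].
apply: (ip_eq_of_nearer (lam := lam)); [exact: side_sign_sqr | exact: ip_cut_comp | |].
- by rewrite -dcob_comp_int; apply: near0.
- by rewrite -dcob_cut_sub_comp_int; apply: near_lam.
Qed.

Lemma voronoi_cut_sub_ker x y :
  voronoi hd tl 0 x -> voronoi hd tl lam x -> voronoi hd tl 0 y -> voronoi hd tl lam y ->
  (x - y <= kermx M^T)%MS.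
Proof.
move=> x0 xlam y0 ylam; apply/sub_kermxP; rewrite mulmxBl; apply/eqP; rewrite subr_eq0.
apply/eqP/rowP => r; rewrite !mul_tr_comp_cochain_mx.
by apply/eqP; rewrite -(eqr_pMn2r (isT : (0 < 2)%N)) !voronoi_cut_comp.
Qed.

Lemma mxrank_cap_ker_cut :
  connectedG hd tl -> (\rank (D :&: kermx M^T) + cut_rank hd tl C <= \rank D)%N.
Proof.
move=> conn; rewrite -(mxrank_mul_ker D M^T) [leqLHS]addnC leq_add2r.
apply: leq_trans (mxrank_comp_cochain_mx R C conn) _.
rewrite -[in leqLHS]mxrank_mul_trmx {1}/comp_cochain_mx -mulmxA.
exact: mxrankM_maxr.
Qed.

End VoronoiCut.

Unset Implicit Arguments.

Theorem mainTheorem15 (R : realFieldType) (n m : nat) (hd tl : 'I_m -> 'I_n)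
    (C : {set 'I_n}) :
  connectedG hd tl -> C != set0 -> C != setT ->
  let D := dmx R hd tl in
  let lam := dcob hd tl (chi R C) in
  let I := fun x => voronoi hd tl 0 x /\ voronoi hd tl lam x in
  (exists (a : 'rV[R]_m) (W : 'M[R]_m),
      (a <= D)%MS /\ (W <= D)%MS /\
      (\rank W + cut_rank hd tl C)%N = \rank D /\
      (forall x, I x -> (x - a <= W)%MS)) /\
  (is_face (voronoi hd tl 0) I -> aff_dim (\rank D).-1 I ->
     cut_rank hd tl C = 1%N).
Proof.
move=> conn C0 CT D lam I.
set W0 := (D :&: kermx (comp_cochain_mx R hd tl C)^T)%MS.
set k := cut_rank hd tl C.
have W0k : (\rank W0 + k <= \rank D)%N := mxrank_cap_ker_cut R C conn.
have kD : (k <= \rank D)%N := leq_trans (leq_addl _ _) W0k.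
have W0D : (W0 <= D)%MS := capmxSl _ _.
have W0_le : (\rank W0 <= \rank D - k <= \rank D)%N.
  by rewrite leq_subr andbT leq_subRL // addnC.
have [W [sW0W sWD rW]] := submx_rank_between W0D W0_le.
have [a aD Ia] : exists2 a, (a <= D)%MS & forall x, I x -> (x - a <= W)%MS.
  apply: exists_affine_base => [x [[xD _] _] //|x y [x0 xlam] [y0 ylam]].
  apply: submx_trans sW0W; rewrite sub_capmx voronoi_cut_sub_ker // andbT.
  by case: x0 => xD _; case: y0 => yD _; rewrite addmx_sub ?eqmx_opp.
split; first by exists a, W; rewrite rW subnK.
move=> _ [indep _]; have := aff_indep_in_rank indep Ia; rewrite rW.
have := cut_rank_gt0 hd tl C0 CT; rewrite -/k; lia.
Qed.
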